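(* There is an absolute constant $C>0$ such that the following holds. Let $E \subset \mathbb{R}^2$ be compact with $\mathcal{S}^1(E) < \infty$, let $\mu$ be the one-dimensional spherical measure $\mathcal{S}^1$ restricted to $E$, and let $\sigma$ be normalised arclength measure on $S^1$. Then for every $\mu\times\sigma$-measurable set $A \subset E \times S^1$ we have $\mathrm{Fav}(A) \le C\,(\mu\times\sigma)(A)$.
   Context: For $E \subset \mathbb{R}^2$, $\mathcal{S}^1(E) = \lim_{r_+\to 0}\inf\sum_{B\in\mathcal{B}}\mathrm{diam}(B)$, the infimum over at most countable covers $\mathcal{B}$ of $E$ by open balls of radius at most $r_+$ (one-dimensional spherical measure). $\sigma$ is arclength measure on $S^1$ normalised to have total mass $1$, and $m$ is Lebesgue measure on $\mathbb{R}$. For $(c,\omega)\in\mathbb{R}\times S^1$ let $l_{c,\omega}=\{x\in\mathbb{R}^2 : x\cdot\omega = c\}$. For $A \subset \mathbb{R}^2\times S^1$, the Favard length is $\mathrm{Fav}(A) = (m\times\sigma)(\{(c,\omega)\in\mathbb{R}\times S^1 : (l_{c,\omega}\times\{\omega\})\cap A \ne \emptyset\})$. *)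

From HB Require Import structures.
From mathcomp Require Import all_boot all_order all_algebra.
From mathcomp Require Import all_classical all_reals all_analysis.
Set Implicit Arguments. Unset Strict Implicit. Unset Printing Implicit Defensive.
Import Order.TTheory GRing.Theory Num.Theory.
Import numFieldNormedType.Exports.
Local Open Scope classical_set_scope.
Local Open Scope ring_scope.

Section Defs.
Context {R : realType}.

Definition pt := (R * R)%type.

Definition edist (x y : pt) : R :=
  Num.sqrt ((x.1 - y.1) ^+ 2 + (x.2 - y.2) ^+ 2).

Definition oball (x : pt) (r : R) : set pt := [set y | edist x y < r].

Definition diam (S : set pt) : \bar R :=
  ereal_sup [set (edist p.1 p.2)%:E | p in S `*` S].

(* An at most countable family of open balls is encoded as a sequence of
   optional (center, radius) pairs; [None] means "no ball". *)
Definition ball_of (b : option (pt * R)) : set pt :=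
  if b is Some (c, r) then oball c r else set0.

Definition ball_diam (b : option (pt * R)) : \bar R :=
  if b is Some (c, r) then diam (oball c r) else 0%E.

Definition ball_covers (E : set pt) (rp : R) : set (nat -> option (pt * R)) :=
  [set F | (forall i c r, F i = Some (c, r) -> 0 < r <= rp) /\
           E `<=` \bigcup_i ball_of (F i)].

Definition S1_delta (E : set pt) (rp : R) : \bar R :=
  ereal_inf [set (\sum_(i <oo) ball_diam (F i))%E | F in ball_covers E rp].

Definition S1 (E : set pt) : \bar R := lim (S1_delta E r @[r --> 0^'+]).

Definition dot (x w : pt) : R := x.1 * w.1 + x.2 * w.2.

Definition circle : set pt := [set w | w.1 ^+ 2 + w.2 ^+ 2 = 1].

(* normalised arclength (outer) measure on S^1, via the angle parametrisation
   theta |-> (cos theta, sin theta), theta in [0, 2 pi); the value of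
   [lebesgue_measure] on an arbitrary set is the Lebesgue outer measure. *)
Definition sigma (B : set pt) : \bar R :=
  (lebesgue_measure [set t : R | (0 <= t < 2 * pi)%R /\ B (cos t, sin t)]
    * ((2 * pi)^-1)%:E)%E.

(* product outer measure (Federer 2.6.1): infimum of sum mu(A_i) nu(B_i)
   over countable covers by rectangles A_i x B_i with A_i mu-measurable and
   B_i nu-measurable (Caratheodory). *)
Definition prod_outer {X Y : Type} (mu : set X -> \bar R) (nu : set Y -> \bar R)
  (S : set (X * Y)) : \bar R :=
  ereal_inf [set (\sum_(i <oo) (mu (F i).1 * nu (F i).2))%E |
     F in [set F : nat -> set X * set Y |
             (forall i, mu.-caratheodory (F i).1 /\ nu.-caratheodory (F i).2) /\
             S `<=` \bigcup_i ((F i).1 `*` (F i).2)]].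

Definition S1_restr (E : set pt) (B : set pt) : \bar R := S1 (B `&` E).

Definition line (c : R) (w : pt) : set pt := [set x | dot x w = c].

Definition Fav (A : set (pt * pt)) : \bar R :=
  prod_outer (@lebesgue_measure R) sigma
    [set cw : R * pt | circle cw.2 /\
       exists x, line cw.1 cw.2 x /\ A (x, cw.2)].

End Defs.

From Pilot Require Import Defs.
From HB Require Import structures.
From mathcomp Require Import all_boot all_order all_algebra.
From mathcomp Require Import all_classical all_reals all_analysis.
From mathcomp Require Import measurable_realfun lra ring.
Import Order.TTheory GRing.Theory Num.Theory.
Import numFieldNormedType.Exports.
Local Open Scope classical_set_scope.
Local Open Scope ring_scope.

(* Cover A by rectangles P_i × Q_i; the lines hitting A are then covered by the
   lines meeting P_i ∩ E with direction in Q_i, so by subadditivity of the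
   product outer measure it suffices to bound each such family by
   (3/2) S¹(P_i ∩ E) σ(Q_i).  Cover P_i ∩ E by balls.  For a ball B(c, r), slice
   the directions into the slabs ⌊c·w / r⌋ = k: a line x·w = s meeting the ball
   has |s - c·w| < r by Cauchy–Schwarz, so for w in slab k the offset s lies in
   an interval of length 3r.  Hence the lines meeting B(c, r) with direction in Q
   have measure at most 3r σ(Q) <= (3/2) diam B(c, r) σ(Q). *)

Section prod_outer.
Local Open Scope ereal_scope.
Context {R : realType} {X Y : Type} {mu : set X -> \bar R} {nu : set Y -> \bar R}.
Hypotheses (mu_ge0 : forall A, 0 <= mu A) (nu_ge0 : forall B, 0 <= nu B).
Implicit Types (S : set (X * Y)) (F : nat -> set X * set Y).

Definition rect_covers S := [set F : nat -> set X * set Y |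
  (forall i, mu.-caratheodory (F i).1 /\ nu.-caratheodory (F i).2) /\
  S `<=` \bigcup_i ((F i).1 `*` (F i).2)].

Definition rect_cover_sum F := \sum_(i <oo) mu (F i).1 * nu (F i).2.

Lemma prod_outerE S :
  prod_outer mu nu S = ereal_inf [set rect_cover_sum F | F in rect_covers S].
Proof. by []. Qed.

Lemma rect_cover_sum_ge0 F : 0 <= rect_cover_sum F.
Proof. by apply: nneseries_ge0 => i _ _; rewrite mule_ge0. Qed.

Lemma prod_outer_ge0 S : 0 <= prod_outer mu nu S.
Proof. by apply: le_ereal_inf_tmp => _ [F _ <-]; exact: rect_cover_sum_ge0. Qed.

Lemma prod_outer_le_cover {S F} :
  rect_covers S F -> prod_outer mu nu S <= rect_cover_sum F.
Proof. by move=> SF; apply: ereal_inf_lbound; exists F. Qed.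

Lemma le_prod_outer {S S'} : S `<=` S' -> prod_outer mu nu S <= prod_outer mu nu S'.
Proof.
move=> SS'; apply/ereal_inf_le_tmp => _ [F [FX S'F] <-].
by exists F => //; split => //; apply: subset_trans S'F.
Qed.

Lemma prod_outer_near_cover S (e : R) : (0 < e)%R -> prod_outer mu nu S < +oo ->
  exists F, rect_covers S F /\ rect_cover_sum F <= prod_outer mu nu S + e%:E.
Proof.
move=> e0 Sfin; have Sfin' : prod_outer mu nu S \is a fin_num.
  by rewrite ge0_fin_numE ?prod_outer_ge0.
have [_ [F SF <-] Fe] := lb_ereal_inf_adherent e0 Sfin'.
by exists F; split => //; exact: ltW.
Qed.

Lemma prod_outer_bigcup_covers (A : nat -> set (X * Y))
    (G : nat -> nat -> set X * set Y) : (forall n, rect_covers (A n) (G n)) ->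
  prod_outer mu nu (\bigcup_n A n) <= \sum_(n <oo) rect_cover_sum (G n).
Proof.
move=> AG; pose w k := mu (G k.1 k.2).1 * nu (G k.1 k.2).2.
have w0 k : 0 <= w k by rewrite mule_ge0.
have /card_esym/ppcard_eqP[f] := card_nat2.
apply: (@le_trans _ _ (rect_cover_sum (fun i => G (f i).1 (f i).2))).
  apply: prod_outer_le_cover; split => [i|]; first exact: (AG (f i).1).1.
  move=> z [n _ /(AG n).2[k _ Gz]]; exists (f^-1%FUN (n, k)) => //.
  by rewrite invK ?inE.
rewrite /rect_cover_sum (@nneseries_esumT _ (fun i => w (f i))) //.
rewrite -(reindex_esum setT setT f w) //.
rewrite (_ : [set: nat * nat] = setT `*`` (fun _ => setT)); last by apply/seteqP; split.
rewrite -(esum_esum (a := fun i j => w (i, j))) // nneseries_esumT; last first.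
  by move=> n; exact: rect_cover_sum_ge0.
by apply: le_esum => n _; rewrite (@nneseries_esumT _ (fun j => w (n, j))).
Qed.

Lemma prod_outer_sigma_subadditive : sigma_subadditive (prod_outer mu nu).
Proof.
move=> A; have [[i ioo]|] := pselect (exists i, prod_outer mu nu (A i) = +oo).
  rewrite (eseries_pinfty _ _ ioo) ?leey// => n _.
  by rewrite -ltNye (lt_le_trans _ (prod_outer_ge0 _)).
rewrite -forallNE => Afin; apply/lee_addgt0Pr => _ /posnumP[e].
rewrite (le_trans _ (epsilon_trick _ _ _)) //; last by move=> n; exact: prod_outer_ge0.
pose P n F := rect_covers (A n) F /\
  rect_cover_sum F <= prod_outer mu nu (A n) + (e%:num / (2 ^ n.+1)%:R)%:E.
have [G AG] : {G : nat -> nat -> set X * set Y & forall n, P n (G n)}.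
  apply: choice => n; apply: prod_outer_near_cover => //.
  by rewrite ltey; apply/eqP; exact: Afin.
apply: le_trans; first exact: (@prod_outer_bigcup_covers A G (fun n => proj1 (AG n))).
by apply: lee_nneseries => n _; [move=> _; exact: rect_cover_sum_ge0 | exact: (AG n).2].
Qed.

End prod_outer.
Arguments rect_covers {R X Y} mu nu S.
Arguments rect_cover_sum {R X Y} mu nu F.

Section sigma.
Context {R : realType}.
Local Open Scope ereal_scope.
Implicit Types B Q : set (@pt R).

Definition angles B : set R := [set t | B (cos t, sin t)].

Let period : set R := [set t | (0 <= t < 2 * pi)%R].

Let inv2pi_ge0 : 0 <= ((2 * pi)^-1)%:E :> \bar R.
Proof. by rewrite lee_fin invr_ge0 mulr_ge0 // pi_ge0. Qed.

Lemma sigmaE B : sigma B = lebesgue_measure (period `&` angles B) * ((2 * pi)^-1)%:E.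
Proof. by []. Qed.

Let sigma0 : sigma (set0 : set (@pt R)) = 0.
Proof.
by rewrite sigmaE (_ : _ `&` _ = set0) ?measure0 ?mul0e //; apply/seteqP; split => t [].
Qed.

Let sigma_ge0 B : 0 <= sigma B.
Proof. by rewrite sigmaE mule_ge0. Qed.

Let le_sigma : {homo (@sigma R) : A B / A `<=` B >-> A <= B}.
Proof.
move=> A B AB; rewrite !sigmaE lee_wpmul2r ?inv2pi_ge0 //.
by apply: le_outer_measure => t [? /AB].
Qed.

Let sigma_sigma_subadditive : sigma_subadditive (@sigma R).
Proof.
move=> F; rewrite sigmaE (eq_eseriesr (fun n _ => sigmaE (F n))).
under eq_eseriesr do rewrite muleC.
rewrite nneseriesZl; last by move=> n _; exact: measure_ge0.
rewrite [leRHS]muleC lee_wpmul2r ?inv2pi_ge0 //.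
apply: le_trans (outer_measure_sigma_subadditive lebesgue_measure _).
by apply: le_outer_measure => t [It [n _ Fn]]; exists n.
Qed.

HB.instance Definition _ := isOuterMeasure.Build R (@pt R) (@sigma R)
  sigma0 sigma_ge0 le_sigma sigma_sigma_subadditive.

Lemma sigma_le1 B : sigma B <= 1.
Proof.
rewrite sigmaE; apply: (@le_trans _ _ (lebesgue_measure period * ((2 * pi)^-1)%:E)).
  by rewrite lee_wpmul2r ?inv2pi_ge0 //; apply: le_outer_measure => t [].
have -> : period = [set` `[0%R, (2 * pi)%R[] by apply/seteqP; split => t; rewrite /= in_itv.
rewrite lebesgue_measure_itv /= lte_fin mulr_gt0 ?pi_gt0 // -EFinD -EFinM subr0.
by rewrite mulfV ?lee_fin // gt_eqF // mulr_gt0 ?pi_gt0.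
Qed.

Lemma sigma_fin_num B : sigma B \is a fin_num.
Proof. by rewrite ge0_fin_numE // (le_lt_trans (sigma_le1 B)) ?ltry. Qed.

Lemma lebesgue_caratheodory {A : set R} :
  measurable A -> lebesgue_measure.-caratheodory A.
Proof. exact: (@sub_caratheodory _ _ _ (@wlength R idfun)). Qed.

Lemma sigma_caratheodory B : measurable (angles B) -> sigma.-caratheodory B.
Proof.
move=> /lebesgue_caratheodory mB X; rewrite !sigmaE -ge0_muleDl ?measure_ge0 //.
congr (_ * _); rewrite (mB (period `&` angles X)).
by congr (_ + _); congr (lebesgue_measure _); apply/seteqP; split => t;
  rewrite /angles /=; tauto.
Qed.

Lemma nneseries_sigma_setI_le Q (C : nat -> set (@pt R)) :
  (forall n, measurable (angles (C n))) -> trivIset setT C ->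
  \sum_(n <oo) sigma (Q `&` C n) <= sigma Q.
Proof.
move=> mC tC; rewrite sigmaE (eq_eseriesr (fun n _ => sigmaE (Q `&` C n))).
under eq_eseriesr do rewrite muleC.
rewrite nneseriesZl; last by move=> n _; exact: measure_ge0.
rewrite [leRHS]muleC lee_wpmul2l ?inv2pi_ge0 //.
have tA : trivIset setT (fun n => angles (C n)).
  by move=> n m _ _ [t [Cn Cm]]; apply: tC => //; exists (cos t, sin t).
have := @caratheodory_lime_le _ _ lebesgue_measure _
  (fun n => lebesgue_caratheodory (mC n)) tA (period `&` angles Q).
apply: le_trans; rewrite -[leLHS]adde0 leeD ?measure_ge0 //.
apply: lee_nneseries => n _; first by move=> _; exact: measure_ge0.
by apply: le_outer_measure => t /= [? []].
Qed.

End sigma.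

Section plane.
Context {R : realType}.
Implicit Types (c x w : @pt R) (r : R).

Lemma dot_sub_le_edist c x w : circle w -> `|dot x w - dot c w| <= Defs.edist c x.
Proof.
rewrite /circle /dot /Defs.edist /= => w1; rewrite -sqrtr_sqr ler_sqrt ?addr_ge0 ?sqr_ge0 //.
set u1 := x.1 - c.1; set u2 := x.2 - c.2.
have -> : x.1 * w.1 + x.2 * w.2 - (c.1 * w.1 + c.2 * w.2) = u1 * w.1 + u2 * w.2.
  by rewrite /u1 /u2; ring.
have -> : (c.1 - x.1) ^+ 2 + (c.2 - x.2) ^+ 2 = (u1 ^+ 2 + u2 ^+ 2) * (w.1 ^+ 2 + w.2 ^+ 2).
  by rewrite w1 mulr1 /u1 /u2; ring.
(* Lagrange's identity: the defect in Cauchy--Schwarz is a square. *)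
have -> : (u1 ^+ 2 + u2 ^+ 2) * (w.1 ^+ 2 + w.2 ^+ 2) =
    (u1 * w.1 + u2 * w.2) ^+ 2 + (u1 * w.2 - u2 * w.1) ^+ 2 by ring.
by rewrite lerDl sqr_ge0.
Qed.

Lemma diam_oball_ge c r : 0 < r -> ((2 * r)%:E <= diam (oball c r))%E.
Proof.
case: c => c1 c2 r0; apply/lee_addgt0Pr => e e0.
pose t := Num.max (r - e / 4) (r / 2).
have t0 : 0 < t by rewrite lt_max; apply/orP; right; lra.
have tr : t < r by rewrite gt_max; apply/andP; split; lra.
have te : 2 * r <= 2 * t + e.
  have : r - e / 4 <= t by rewrite le_max lexx.
  lra.
have dist_horizontal (a b : R) : Defs.edist (a, c2) (b, c2) = `|b - a|.
  rewrite /Defs.edist /= subrr expr0n addr0 -sqrtr_sqr; congr Num.sqrt; ring.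
apply: (@le_trans _ _ ((2 * t)%:E + e%:E)); first by rewrite -EFinD lee_fin.
rewrite leeD2r //; apply: ereal_sup_ubound.
exists ((c1 + t, c2), (c1 - t, c2)).
  split; rewrite /oball /= dist_horizontal.
  - by rewrite addrC addKr gtr0_norm.
  - by rewrite addrC addKr normrN gtr0_norm.
rewrite /= dist_horizontal (_ : c1 - t - (c1 + t) = - (2 * t)); last by ring.
by rewrite normrN gtr0_norm // mulr_gt0.
Qed.
End plane.

Section spherical_measure.
Context {R : realType}.
Local Open Scope ereal_scope.
Implicit Types P : set (@pt R).

Lemma ball_covers_diam_ge0 P (rp : R) B :
  ball_covers P rp B -> forall i, 0 <= ball_diam (B i).
Proof.
case=> Br _ i; case Bi: (B i) => [[c r]|] //=.
have /andP[r0 _] := Br _ _ _ Bi.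
apply: le_trans (diam_oball_ge c r r0).
by rewrite lee_fin mulr_ge0 ?ltW.
Qed.

Lemma S1_delta_ge0 P (rp : R) : 0 <= S1_delta P rp.
Proof.
apply: le_ereal_inf_tmp => _ [B PB <-].
by apply: nneseries_ge0 => i _ _; exact: ball_covers_diam_ge0 PB i.
Qed.

Lemma S1_delta_antitone P (r s : R) : (r <= s)%R -> S1_delta P s <= S1_delta P r.
Proof.
move=> rs; apply: ereal_inf_le_tmp => _ [B [Br PB] <-]; exists B => //.
by split => // i c t /Br /andP[-> /le_trans]; apply.
Qed.

Lemma S1_delta_le_S1 P : S1_delta P 1 <= S1 P.
Proof.
have S1_sup : S1 P = ereal_sup (S1_delta P @` [set` `]0%R, +oo[]).
  apply: cvg_lim => //; apply: nonincreasing_at_right_cvge => // r s _ _.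
  exact: S1_delta_antitone.
by rewrite S1_sup; apply: ereal_sup_ubound; exists 1%R; rewrite //= in_itv /= ltr01.
Qed.

Lemma S1_ge0 P : 0 <= S1 P.
Proof. exact: le_trans (S1_delta_ge0 _ _) (S1_delta_le_S1 _). Qed.

End spherical_measure.

Section slab.
Context {R : realType}.
Implicit Types (c w : @pt R) (r : R) (k : int).

Definition slab c r k : set (@pt R) := [set w | Num.floor (dot c w / r) = k].

Lemma slab_bounds {c r k w} : 0 < r -> slab c r k w ->
  k%:~R * r <= dot c w < k%:~R * r + r.
Proof.
move=> r0 <-; have := floor_itv (dot c w / r).
by rewrite ler_pdivlMr // ltr_pdivrMr // intrD (mulrDl _ 1%:~R) mul1r.
Qed.

Lemma measurable_angles_slab c r k : measurable (angles (slab c r k)).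
Proof.
pose g t := dot c (cos t, sin t) / r.
have mg : measurable_fun setT g.
  apply: measurable_funM => //; apply: measurable_funD => //;
    apply: measurable_funM => //; apply: continuous_measurable_fun.
  - exact: continuous_cos.
  - exact: continuous_sin.
rewrite (_ : angles _ = g @^-1` `[k%:~R, (k + 1)%:~R[).
  by rewrite -[X in measurable X]setTI; exact: mg measurableT _ (measurable_itv _).
apply/funext => t; apply/propext; rewrite /= in_itv /= -floor_eq.
by split => [<-|/eqP].
Qed.

End slab.

Section lines.
Context {R : realType}.
Local Open Scope ereal_scope.
Implicit Types P Q : set (@pt R).

Local Notation lines_outer := (prod_outer (@lebesgue_measure R) (@sigma R)).

Definition lines_meeting P Q : set (R * @pt R) :=
  [set cw | circle cw.2 /\ Q cw.2 /\ exists2 x, P x & line cw.1 cw.2 x].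

Let leb_ge0 (A : set R) : 0 <= lebesgue_measure A. Proof. exact: measure_ge0. Qed.
Let sigma_ge0 (B : set (@pt R)) : 0 <= sigma B. Proof. exact: outer_measure_ge0. Qed.

Lemma lines_meeting_bigcup P Q (P_ : nat -> set (@pt R)) :
  P `<=` \bigcup_i P_ i -> lines_meeting P Q `<=` \bigcup_i lines_meeting (P_ i) Q.
Proof.
move=> PP [s w] [cw [Qw [x /PP[i _ Pix] sxw]]].
by exists i => //; split => //; split => //; exists x.
Qed.

Lemma lines_outer_null (S : set (R * @pt R)) Q :
  sigma.-caratheodory Q -> sigma Q = 0 -> S `<=` setT `*` Q -> lines_outer S = 0.
Proof.
move=> cQ Q0 SQ; apply/eqP; rewrite eq_le prod_outer_ge0 ?andbT //.
have cover : rect_covers lebesgue_measure sigma S (fun=> (setT, Q)).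
  split=> [_|z /SQ Qz]; last by exists 0%N.
  by split => //; exact/lebesgue_caratheodory/measurableT.
apply: le_trans (prod_outer_le_cover cover) _.
by rewrite /rect_cover_sum /= Q0 eseries0 // => n _ _; rewrite mule0.
Qed.

Lemma lines_outer_ball c (r : R) Q : (0 < r)%R -> sigma.-caratheodory Q ->
  lines_outer (lines_meeting (oball c r) Q) <= (3 * r)%:E * sigma Q.
Proof.
move=> r0 cQ.
pose level w := Num.floor (dot c w / r).
pose slabN n := if pickle_inv n is Some k then slab c r k else set0.
pose window n : set R := if pickle_inv n is Some k
  then [set` `](k%:~R * r - r)%R, (k%:~R * r + 2 * r)%R[] else set0.
have cover : rect_covers lebesgue_measure sigma (lines_meeting (oball c r) Q)
    (fun n => (window n, Q `&` slabN n)).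
  split=> [n|[s w] [cw [Qw [x xcr sxw]]]].
    split=> /=.
      by rewrite /window; case: pickle_inv => [k|]; apply: lebesgue_caratheodory.
    apply: caratheodory_measurable_setI => //; apply: sigma_caratheodory.
    by rewrite /slabN; case: pickle_inv => [k|];
      [exact: measurable_angles_slab | exact: measurable0].
  exists (pickle (level w)); first by [].
  rewrite /window /slabN pickleK_inv; split; last by split.
  have := dot_sub_le_edist c x w cw; rewrite sxw => /le_lt_trans/(_ xcr).
  rewrite /= in_itv /= ltr_norml; have := slab_bounds r0 (erefl (level w)); lra.
apply: le_trans (prod_outer_le_cover cover) _.
apply: le_trans (_ : \sum_(n <oo) (3 * r)%:E * sigma (Q `&` slabN n) <= _).
  apply: lee_nneseries => n _; first by rewrite mule_ge0.
  apply: lee_wpmul2r => //; rewrite /window; case: pickle_inv => [k|]; last first.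
    by rewrite measure0 lee_fin mulr_ge0 ?(ltW r0).
  rewrite lebesgue_measure_itv /= lte_fin ifT; last lra.
  by rewrite -EFinD lee_fin; lra.
rewrite nneseriesZl // lee_wpmul2l ?lee_fin ?mulr_ge0 ?(ltW r0) //.
apply: nneseries_sigma_setI_le => [n|n m _ _ [w []]]; rewrite /slabN.
  by case: pickle_inv => [k|]; [exact: measurable_angles_slab | exact: measurable0].
case En: (pickle_inv n) => [k|] //; case Em: (pickle_inv m) => [k'|] // wk wk'.
by rewrite -(@pickle_invK int n) -(@pickle_invK int m) En Em -wk -wk'.
Qed.

Lemma lines_outer_le_ball_cover P Q (rp : R) B : sigma.-caratheodory Q ->
  ball_covers P rp B ->
  lines_outer (lines_meeting P Q) <=
    (3 / 2)%:E * sigma Q * \sum_(i <oo) ball_diam (B i).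
Proof.
move=> cQ PB; have [Br Pcov] := PB; set s := fine (sigma Q).
have sQ : sigma Q = s%:E by rewrite fineK ?sigma_fin_num.
have s0 : (0 <= s)%R by rewrite -lee_fin -sQ.
rewrite sQ -EFinM -nneseriesZl; last by move=> i _; exact: ball_covers_diam_ge0 PB i.
apply: le_trans (le_prod_outer (@lines_meeting_bigcup P Q _ Pcov)) _.
apply: le_trans (prod_outer_sigma_subadditive leb_ge0 sigma_ge0 _) _.
apply: lee_nneseries => i _; first by move=> _; exact: prod_outer_ge0.
case Bi: (B i) => [[c r]|] /=; last first.
  rewrite (lines_outer_null _ _ (caratheodory_measurable_set0 sigma)
    (outer_measure0 sigma)) ?mule0 //.
  by move=> ? [_ [_ []]].
have /andP[r0 _] := Br _ _ _ Bi.
apply: le_trans (lines_outer_ball c _ _ r0 cQ) _.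
rewrite sQ -EFinM (_ : (3 * r * s = 3 / 2 * s * (2 * r))%R); last by field.
by rewrite EFinM lee_wpmul2l ?diam_oball_ge // lee_fin mulr_ge0.
Qed.

Lemma lines_outer_le_S1 P Q : sigma.-caratheodory Q ->
  lines_outer (lines_meeting P Q) <= (3 / 2)%:E * (S1 P * sigma Q).
Proof.
move=> cQ; have [Q0|Qneq0] := eqVneq (sigma Q) 0.
  rewrite (lines_outer_null _ _ cQ Q0) ?Q0 ?mule0 //.
  by move=> -[s w] [_ [Qw _]].
rewrite (muleC (S1 P)) muleA.
apply: le_trans (lee_wpmul2l _ (S1_delta_le_S1 P)); last by rewrite mule_ge0.
set s := fine (sigma Q).
have sQ : sigma Q = s%:E by rewrite fineK ?sigma_fin_num.
have s0 : (0 < s)%R by rewrite lt0r -lee_fin -sQ sigma_ge0 andbT -(@eqe R) -sQ.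
rewrite sQ -EFinM /S1_delta -ereal_inf_pZl ?mulr_gt0 //.
apply: le_ereal_inf_tmp => _ [_ [B PB <-] <-].
by rewrite EFinM -sQ; exact: lines_outer_le_ball_cover PB.
Qed.

Lemma Fav_le_prod_outer (E : set (@pt R)) (A : set (@pt R * @pt R)) :
  A `<=` E `*` circle ->
  Fav A <= (3 / 2)%:E * prod_outer (S1_restr E) sigma A.
Proof.
move=> AE; rewrite prod_outerE -ereal_inf_pZl //.
apply: le_ereal_inf_tmp => _ [_ [G [cG AG] <-] <-].
have Fav_lines : [set cw | circle cw.2 /\ exists x, line cw.1 cw.2 x /\ A (x, cw.2)]
    `<=` \bigcup_i lines_meeting ((G i).1 `&` E) (G i).2.
  move=> [s w] [cw [x [sxw Axw]]]; have [i _ [G1 G2]] := AG _ Axw.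
  have [Ex _] := AE _ Axw.
  by exists i => //; split => //; split => //; exists x.
apply: le_trans (le_prod_outer Fav_lines) _.
apply: le_trans (prod_outer_sigma_subadditive leb_ge0 sigma_ge0 _) _.
rewrite -nneseriesZl; last by move=> i _; rewrite mule_ge0 ?S1_ge0.
apply: lee_nneseries => i _; first by move=> _; exact: prod_outer_ge0.
exact: lines_outer_le_S1 (cG i).2.
Qed.

End lines.

Theorem lemma5p1 (R : realType) :
  exists C : R, 0 < C /\
  forall E : set (@pt R), compact E -> (S1 E < +oo)%E ->
  forall A : set (@pt R * @pt R), A `<=` E `*` circle ->
    (prod_outer (S1_restr E) sigma).-caratheodory A ->
    (Fav A <= C%:E * prod_outer (S1_restr E) sigma A)%E.
Proof.
exists (3 / 2); split => [|E _ _ A AE _]; first by rewrite divr_gt0.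
exact: Fav_le_prod_outer.
Qed.
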